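(* Let $X$ be a finite set and let $\{A_1,\ldots,A_k\}$ and $\{B_1,\ldots,B_k\}$ be two partitions of $X$ with $|A_i|=|B_i|$ for every $i=1,\ldots,k$. Let $\mathcal G=(V,E)$ be the directed graph on the nodes $V=\{1,\ldots,k\}$ in which $(i,j)\in E$ if and only if $A_i\cap B_j\neq\emptyset$. If $(i,j)\in E$, then there exists a directed path from $j$ to $i$.
   Context: A directed path from $i$ to $j$ is a sequence of nodes $i_1i_2\ldots i_q$ with $i_1=i$, $i_q=j$ and $(i_a,i_{a+1})\in E$ for all $a$; the one-node sequence $i$ is a directed path from $i$ to itself. Partition members may be empty. *)

From mathcomp Require Import all_boot.
Set Implicit Arguments. Unset Strict Implicit. Unset Printing Implicit Defensive.

(* An indexed family A_1..A_k of subsets of the finite set X is a partition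
   of X: pairwise disjoint members (members may be empty) covering X. *)
Definition is_partition (X : finType) (k : nat) (A : 'I_k -> {set X}) : Prop :=
  (forall i j : 'I_k, i != j -> [disjoint A i & A j]) /\
  \bigcup_(i < k) A i = [set: X].

Definition meet_edge (X : finType) (k : nat) (A B : 'I_k -> {set X}) : rel 'I_k :=
  fun i j => A i :&: B j != set0.

Definition dir_path (V : eqType) (e : rel V) (i j : V) : Prop :=
  exists p : seq V, path e i p && (last i p == j).

From mathcomp Require Import all_boot.
Set Implicit Arguments. Unset Strict Implicit. Unset Printing Implicit Defensive.

(* Let S be the set of nodes reachable from j. Every x in a block A_l with
   l in S lies in some B_m, and (l, m) is an edge, so m is in S as well: the
   union of the A_l over S is contained in the union of the B_l over S. Both
   unions are disjoint and |A_l| = |B_l|, so they have the same size and are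
   equal. An element of A_i and B_j lies in the second union, hence in the
   first, so i is in S. *)

Lemma card_bigcup_disjoint (T I : finType) (P : {pred I}) (F : I -> {set T}) :
  {in P &, forall i j, i != j -> [disjoint F i & F j]} ->
  #|\bigcup_(i in P) F i| = \sum_(i in P) #|F i|.
Proof.
move=> disF; rewrite -sum1_card.
under [RHS]eq_bigr => i _ do rewrite -sum1_card.
rewrite (exchange_big_dep (mem (\bigcup_(i in P) F i))) /=; last first.
  by move=> i x Pi Fix; apply/bigcupP; exists i.
apply: eq_bigr => x /bigcupP[i Pi Fix].
rewrite (big_pred1 i) // => j /=; apply/andP/eqP => [[Pj Fjx]|->//].
apply/eqP; apply: contraT => neq.
by rewrite (disjointFr (disF _ _ Pj Pi neq) Fjx) in Fix.
Qed.

Lemma dir_path_connect (V : finType) (e : rel V) (i j : V) :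
  dir_path e i j <-> connect e i j.
Proof.
split => [[p /andP[e_p /eqP <-]]|/connectP[p e_p ->]].
  by apply/connectP; exists p.
by exists p; rewrite e_p eqxx.
Qed.

Section Partition.

Variables (X : finType) (k : nat) (A : 'I_k -> {set X}).
Hypothesis partA : is_partition A.

Lemma partition_block_uniq (l m : 'I_k) (x : X) :
  x \in A l -> x \in A m -> l = m.
Proof.
move=> Alx Amx; apply/eqP; apply: contraT => neq.
by rewrite (disjointFr (partA.1 _ _ neq) Alx) in Amx.
Qed.

Lemma partition_cover (x : X) : exists l, x \in A l.
Proof.
have : x \in \bigcup_(l < k) A l by rewrite partA.2 inE.
by case/bigcupP => l _ Alx; exists l.
Qed.

Lemma card_bigcup_partition (S : {pred 'I_k}) :
  #|\bigcup_(l in S) A l| = \sum_(l in S) #|A l|.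
Proof. by apply: card_bigcup_disjoint => l m _ _; apply: partA.1. Qed.

End Partition.

Section EqualSizePartitions.

Variables (X : finType) (k : nat) (A B : 'I_k -> {set X}).
Hypotheses (partA : is_partition A) (partB : is_partition B).
Hypothesis card_AB : forall l, #|A l| = #|B l|.

Let e := meet_edge A B.

Lemma bigcup_closed_sub (S : {set 'I_k}) :
  (forall l m, l \in S -> e l m -> m \in S) ->
  \bigcup_(l in S) A l \subset \bigcup_(l in S) B l.
Proof.
move=> closedS; apply/subsetP => x /bigcupP[l Sl Alx].
have [m Bmx] := partition_cover partB x.
apply/bigcupP; exists m => //; apply: closedS Sl _.
by apply/set0Pn; exists x; rewrite inE Alx.
Qed.

Lemma bigcup_closed_eq (S : {set 'I_k}) :
  (forall l m, l \in S -> e l m -> m \in S) ->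
  \bigcup_(l in S) A l = \bigcup_(l in S) B l.
Proof.
move=> closedS; apply/eqP; rewrite eqEcard bigcup_closed_sub //=.
rewrite (card_bigcup_partition partA) (card_bigcup_partition partB).
by apply/eq_leq/eq_bigr => l _; rewrite card_AB.
Qed.

End EqualSizePartitions.

Theorem lemma3p25 (X : finType) (k : nat) (A B : 'I_k -> {set X}) :
  is_partition A -> is_partition B ->
  (forall i : 'I_k, #|A i| = #|B i|) ->
  forall i j : 'I_k, meet_edge A B i j -> dir_path (meet_edge A B) j i.
Proof.
move=> partA partB card_AB i j /set0Pn[x]; rewrite inE => /andP[Aix Bjx].
apply/dir_path_connect.
pose S := [set l | connect (meet_edge A B) j l].
have closedS l m : l \in S -> meet_edge A B l m -> m \in S.
  by rewrite !inE => jl lm; apply: connect_trans jl (connect1 lm).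
have : x \in \bigcup_(l in S) B l by apply/bigcupP; exists j; rewrite ?inE.
rewrite -(bigcup_closed_eq partA partB card_AB closedS).
case/bigcupP => l Sl Alx.
by rewrite -(partition_block_uniq partA Alx Aix) -inE.
Qed.
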